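(* For any simple graph $G$ on $n$ vertices, \[|E(G)|-|E(G^{(2)})|\le\left\lfloor\frac n2\right\rfloor.\] Furthermore, equality holds if and only if every connected component of $G$ is a complete bipartite graph $K_{a,b}$ with $|a-b|\le 1$ (an isolated vertex being regarded as $K_{0,1}$) and at most one component of $G$ has an odd number of vertices.
   Context: For a simple graph $G$, $G^{(2)}$ is the graph on $V(G)$ in which $\{u,v\}$ ($u\ne v$) is an edge iff there is $w\in V(G)$ with $\{u,w\},\{v,w\}\in E(G)$. *)

From mathcomp Require Import all_boot.
Set Implicit Arguments. Unset Strict Implicit. Unset Printing Implicit Defensive.

Definition simple_graph (T : finType) (e : rel T) : Prop :=
  symmetric e /\ irreflexive e.

Definition edges (T : finType) (e : rel T) : {set {set T}} :=
  [set A : {set T} | [exists x, exists y, e x y && (A == [set x; y])]].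

Definition sq_graph (T : finType) (e : rel T) : rel T :=
  fun u v => (u != v) && [exists w, e u w && e v w].

Definition component (T : finType) (e : rel T) (x : T) : {set T} :=
  [set y | connect e x y].

Definition components (T : finType) (e : rel T) : {set {set T}} :=
  [set component e x | x : T].

Definition balanced_complete_bipartite (T : finType) (e : rel T) (C : {set T}) : Prop :=
  exists A B : {set T},
    [/\ A :|: B = C, [disjoint A & B],
        {in C &, forall x y, e x y = ((x \in A) && (y \in B)) || ((x \in B) && (y \in A))}
      & (#|A| <= #|B|.+1 /\ #|B| <= #|A|.+1)].

From mathcomp Require Import all_boot ssrint zify.
Set Implicit Arguments. Unset Strict Implicit. Unset Printing Implicit Defensive.
Import IntDist.

(* Count ordered adjacent pairs (arcs); the bound reads #arcs(G) <= #arcs(G^(2)) + 2 floor(n/2).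
   Delete both ends of an edge uv.  Exchanging u and v maps every lost arc of G other than
   uv and vu to an arc of G^(2) at u or v (the exchanged vertex is a common neighbour), so
   the bound follows by induction on n.  In the equality case this map is onto, which forces
   any two neighbours of a vertex to have the same neighbourhood; so every component is a
   complete bipartite K_{a,b}, and then #arcs(G^(2)) + n - #arcs(G) = sum (a - b)^2.
   As (a - b)^2 >= odd (a + b), with equality iff |a - b| <= 1, that sum is at least the
   number of odd components, whose parity is that of n. *)

Section Arcs.
Variable T : finType.
Implicit Types r : rel T.

Definition arcs r : {set T * T} := [set p | r p.1 p.2].

Definition deg r x := #|[set y | r x y]|.

Lemma eq_arcs r r' : r =2 r' -> arcs r = arcs r'.
Proof. by move=> eq_r; apply/setP => p; rewrite !inE eq_r. Qed.

Lemma sum_deg r : \sum_x deg r x = #|arcs r|.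
Proof.
rewrite -sum1_card (eq_bigl (fun p : T * T => r p.1 p.2)) => [|p]; last by rewrite inE.
rewrite -(pair_big_dep xpredT r (fun _ _ => 1)) /=.
by apply: eq_bigr => x _; rewrite /deg -sum1_card; apply: eq_bigl => y; rewrite inE.
Qed.

Lemma arcs_over_edge r x y : simple_graph r -> r x y ->
  [set p in arcs r | [set p.1; p.2] == [set x; y]] = [set (x, y); (y, x)].
Proof.
move=> [r_sym r_irr] rxy; have neq_xy : x != y by apply: contraTneq rxy => ->; rewrite r_irr.
apply/setP => -[a b]; rewrite !inE /=; apply/idP/idP => [/andP [rab /eqP eq_ab] | ].
  have neq_ab : a != b by apply: contraTneq rab => ->; rewrite r_irr.
  have : a \in [set x; y] by rewrite -eq_ab !inE eqxx.
  have : b \in [set x; y] by rewrite -eq_ab !inE eqxx orbT.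
  rewrite !inE !xpair_eqE => /orP [] /eqP eq_b /orP [] /eqP eq_a;
    by move: neq_ab; rewrite eq_a eq_b ?eqxx ?orbT.
case/orP=> /eqP [-> ->]; first by rewrite rxy eqxx.
by rewrite r_sym rxy setUC eqxx.
Qed.

Lemma handshake r : simple_graph r -> #|arcs r| = #|edges r|.*2.
Proof.
move=> r_simple; rewrite -sum1_card (partition_big_imset (fun p : T * T => [set p.1; p.2])).
have -> : [set [set p.1; p.2] | p in arcs r] = edges r.
  apply/setP => E; rewrite /edges inE; apply/imsetP/existsP => [[[x y]] | [x]].
    by rewrite inE /= => rxy ->; exists x; apply/existsP; exists y; rewrite rxy eqxx.
  by case/existsP => y /andP [rxy /eqP ->]; exists (x, y); rewrite ?inE.
rewrite (eq_bigr (fun=> 2)) => [|E]; first by rewrite sum_nat_const muln2.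
rewrite /edges inE => /existsP [x /existsP [y /andP [rxy /eqP ->]]].
have neq_xy : x != y by apply: contraTneq rxy => ->; rewrite r_simple.2.
rewrite (eq_bigl [in [set (x, y); (y, x)]]) => [|p]; last first.
  by rewrite -(arcs_over_edge r_simple rxy) !inE.
by rewrite sum1_card cards2 xpair_eqE negb_and neq_xy.
Qed.

Lemma sq_graph_simple r : symmetric r -> simple_graph (sq_graph r).
Proof.
move=> r_sym; split=> [x y | x]; last by rewrite /sq_graph eqxx.
by rewrite /sq_graph eq_sym; congr (_ && _); apply: eq_existsb => w; rewrite andbC.
Qed.

Lemma eq_sq_graph r r' : r =2 r' -> sq_graph r =2 sq_graph r'.
Proof. by move=> eq_r x y; rewrite /sq_graph; under eq_existsb do rewrite !eq_r. Qed.

End Arcs.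

Definition induced (T : finType) (e : rel T) (S : {set T}) : rel T :=
  fun x y => [&& x \in S, y \in S & e x y].

Lemma induced_setT (T : finType) (e : rel T) : induced e [set: T] =2 e.
Proof. by move=> x y; rewrite /induced !inE. Qed.

Section RemoveEdge.
Variables (T : finType) (e : rel T) (S : {set T}) (u v : T).
Hypotheses (e_sym : symmetric e) (e_irr : irreflexive e) (ruv : induced e S u v).

Let S' := S :\ u :\ v.
Let r := induced e S.
Let q := sq_graph r.
Let r' := induced e S'.
Let q' := sq_graph r'.
Let at_uv z := (z == u) || (z == v).
Let touches (p : T * T) := at_uv p.1 || at_uv p.2.
Let X := [set p in arcs r | touches p].
Let Y := [set p in arcs q | touches p].
Let swap z := if z == u then v else if z == v then u else z.
Let swap_arc (p : T * T) := (swap p.1, swap p.2).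
Let Z : {set T * T} := swap_arc @: (X :\ (u, v) :\ (v, u)).

Let r_sym : symmetric r.
Proof. by move=> x y; rewrite /r /induced e_sym andbCA. Qed.

Let r_irr : irreflexive r.
Proof. by move=> x; rewrite /r /induced e_irr !andbF. Qed.

Let q_sym : symmetric q.
Proof. exact: (sq_graph_simple r_sym).1. Qed.

Let neq_uv : u != v.
Proof. by apply: contraTneq ruv => ->; rewrite /induced e_irr !andbF. Qed.

Let swapK : involutive swap.
Proof.
move=> z; rewrite /swap; case: (eqVneq z u) => [-> | neq_zu].
  by rewrite eqxx eq_sym (negbTE neq_uv).
by case: (eqVneq z v) => [-> | neq_zv]; rewrite ?eqxx ?(negbTE neq_zu) ?(negbTE neq_zv).
Qed.

Let swap_u : swap u = v. Proof. by rewrite /swap eqxx. Qed.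

Let swap_v : swap v = u. Proof. by rewrite /swap eqxx eq_sym (negbTE neq_uv). Qed.

Let swap_at_uv t : at_uv t -> at_uv (swap t) /\ r (swap t) t.
Proof. by case/orP=> /eqP ->; rewrite ?swap_u ?swap_v /at_uv eqxx ?orbT // r_sym. Qed.

Let swap_off_uv z : ~~ at_uv z -> swap z = z.
Proof. by rewrite /at_uv /swap negb_or => /andP [/negbTE -> /negbTE ->]. Qed.

Let arc_uv x y : at_uv x -> at_uv y -> r x y -> (x, y) = (u, v) \/ (x, y) = (v, u).
Proof. by case/orP=> /eqP -> /orP [] /eqP ->; rewrite ?r_irr //; [left | right]. Qed.

Let sq_swap t z : at_uv t -> ~~ at_uv z -> r t z -> q (swap t) z.
Proof.
move=> t_uv z_uv rtz; have [st_uv rst] := swap_at_uv t_uv.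
rewrite /q /sq_graph; apply/andP; split; first by apply: contraNneq z_uv => <-.
by apply/existsP; exists t; rewrite rst r_sym.
Qed.

Lemma card_removed_edge : #|S| = #|S'|.+2.
Proof.
case/and3P: ruv => uS vS _.
by rewrite (cardsD1 u S) uS (cardsD1 v (S :\ u)) !inE eq_sym neq_uv vS.
Qed.

Let card_arcs_split : #|arcs r| = #|arcs r'| + #|X|.
Proof.
rewrite -(cardsID [set p | touches p] (arcs r)) addnC.
congr (_ + _); last by apply: eq_card => p; rewrite !inE.
apply: eq_card => -[x y]; rewrite !inE /= /r /r' /touches /at_uv /induced !inE.
by case: (x == u); case: (x == v); case: (y == u); case: (y == v); rewrite /= ?andbF.
Qed.

Let card_sq_arcs_split : #|arcs q'| + #|Y| <= #|arcs q|.
Proof.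
rewrite -(cardsID [set p | touches p] (arcs q)) [X in _ <= X]addnC.
apply: leq_add; last by apply/subset_leq_card/subsetP => p; rewrite !inE.
apply/subset_leq_card/subsetP => -[x y]; rewrite !inE /= /q' /sq_graph.
case/andP=> neq_xy /existsP [w /andP []]; rewrite /r' /induced !inE.
case/and3P=> /and3P [nxv nxu xS] /and3P [_ _ wS] exw /and3P [/and3P [nyv nyu yS] _ eyw].
rewrite /touches /at_uv (negbTE nxv) (negbTE nxu) (negbTE nyv) (negbTE nyu) /=.
by rewrite /q /sq_graph neq_xy; apply/existsP; exists w; rewrite /r /induced xS yS wS exw eyw.
Qed.

Let card_touching_arcs : #|X| <= #|Z| + 2.
Proof.
rewrite card_imset; last by apply: (can_inj (g := swap_arc)) => -[x y]; rewrite /swap_arc !swapK.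
rewrite (cardsD1 (u, v) X) (cardsD1 (v, u) (X :\ (u, v))).
(* [set] identifies two syntactically different copies of this cardinal. *)
set k := #|X :\ (u, v) :\ (v, u)|; lia.
Qed.

Let swap_touching_arcs : Z \subset Y.
Proof.
apply/subsetP => _ /imsetP [[x y] + ->]; rewrite !inE /= /touches.
case/and4P=> neq_vu neq_uv' rxy.
case: (boolP (at_uv x)) => [x_uv _ | x_uv /= y_uv].
  have y_uv : ~~ at_uv y.
    apply/negP => y_uv; case: (arc_uv x_uv y_uv rxy) => eq_xy.
    - by rewrite eq_xy eqxx in neq_uv'.
    - by rewrite eq_xy eqxx in neq_vu.
  by rewrite (swap_off_uv y_uv) sq_swap //= (swap_at_uv x_uv).1.
rewrite (swap_off_uv x_uv) (swap_at_uv y_uv).1 orbT andbT.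
by rewrite q_sym sq_swap // r_sym.
Qed.

Lemma card_arcs_remove_edge :
  #|arcs r| + #|arcs q'| <= #|arcs r'| + #|arcs q| + 2.
Proof.
have := card_sq_arcs_split; have := subset_leq_card swap_touching_arcs.
rewrite card_arcs_split; have := card_touching_arcs; lia.
Qed.

(* Equality forces Z = Y, so the arc (u, x) of G^(2) is the image of the arc (v, x) of G. *)
Lemma remove_edge_tight :
  #|arcs r'| + #|arcs q| + 2 <= #|arcs r| + #|arcs q'| ->
  forall w x, r u w -> r w x -> x != u -> r v x.
Proof.
move=> tight w x ruw rwx neq_xu.
have card_YZ : #|Y| <= #|Z|.
  move: tight; have := card_sq_arcs_split; have := card_touching_arcs.
  rewrite card_arcs_split; lia.
have Z_eq_Y : Z = Y by apply/eqP; rewrite eqEcard swap_touching_arcs card_YZ.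
have : (u, x) \in Y.
  rewrite !inE /touches /at_uv eqxx /= andbT /q /sq_graph eq_sym neq_xu /=.
  by apply/existsP; exists w; rewrite ruw r_sym.
rewrite -Z_eq_Y => /imsetP [[a b] + [eq_ua eq_xb]].
have -> : a = v by rewrite -[a]swapK -eq_ua /swap eqxx.
have -> : b = swap x by rewrite -[b]swapK -eq_xb.
rewrite /swap (negbTE neq_xu); case: (eqVneq x v) => [-> | _]; first by rewrite !inE eqxx.
by rewrite !inE => /and3P [_ _ /andP []].
Qed.

End RemoveEdge.

Section InducedBound.
Variables (T : finType) (e : rel T).
Hypotheses (e_sym : symmetric e) (e_irr : irreflexive e).

Lemma card_arcs_induced_le S :
  #|arcs (induced e S)| <= #|arcs (sq_graph (induced e S))| + (#|S|./2).*2.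
Proof.
elim: {S}#|S|.+1 {-2}S (ltnSn #|S|) => // n IH S ltSn.
have [/existsP [u /existsP [v ruv]] | no_edge] := boolP [exists u, exists v, induced e S u v].
  have card_S := card_removed_edge e_irr ruv.
  have := IH (S :\ u :\ v) (ltac:(lia)); have := card_arcs_remove_edge e_sym e_irr ruv.
  rewrite card_S /= doubleS; lia.
suff -> : arcs (induced e S) = set0 by rewrite cards0.
apply/setP => -[x y]; rewrite !inE /=; apply/negbTE; apply: contra no_edge => rxy.
by apply/existsP; exists x; apply/existsP; exists y.
Qed.

Lemma induced_tight S :
  #|arcs (induced e S)| = #|arcs (sq_graph (induced e S))| + (#|S|./2).*2 ->
  forall u v w x, induced e S u v -> induced e S u w -> induced e S w x -> x != u ->
    induced e S v x.
Proof.
move=> tight u v w x ruv; apply: (remove_edge_tight e_sym e_irr ruv).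
have := card_arcs_induced_le (S :\ u :\ v).
by rewrite tight (card_removed_edge e_irr ruv) /= doubleS; lia.
Qed.

End InducedBound.

Definition twin_neighbours (T : finType) (e : rel T) :=
  forall u v w, e u v -> e u w -> e v =1 e w.

Section WholeGraph.
Variables (T : finType) (e : rel T).
Hypotheses (e_sym : symmetric e) (e_irr : irreflexive e).

Let arcs_induced_setT : arcs (induced e [set: T]) = arcs e.
Proof. exact/eq_arcs/induced_setT. Qed.

Let sq_arcs_induced_setT : arcs (sq_graph (induced e [set: T])) = arcs (sq_graph e).
Proof. exact/eq_arcs/eq_sq_graph/induced_setT. Qed.

Lemma card_arcs_le : #|arcs e| <= #|arcs (sq_graph e)| + (#|T|./2).*2.
Proof.
have := card_arcs_induced_le e_sym e_irr [set: T].
by rewrite cardsT arcs_induced_setT sq_arcs_induced_setT.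
Qed.

Lemma card_arcs_tight :
  #|arcs e| = #|arcs (sq_graph e)| + (#|T|./2).*2 -> twin_neighbours e.
Proof.
rewrite -cardsT -arcs_induced_setT -sq_arcs_induced_setT.
move=> /(induced_tight e_sym e_irr) tight u v w ruv ruw z.
have path3 u' v' w' x' : e u' v' -> e u' w' -> e w' x' -> x' != u' -> e v' x'.
  by have := tight u' v' w' x'; rewrite !induced_setT.
have [-> | neq_zu] := eqVneq z u; first by rewrite -!(e_sym u) ruv ruw.
by apply/idP/idP => [rvz | rwz]; [apply: path3 ruv _ _ | apply: path3 ruw _ _].
Qed.

End WholeGraph.

Definition complete_bipartite (T : finType) (e : rel T) (C A B : {set T}) :=
  [/\ A :|: B = C, [disjoint A & B] &
      {in C &, forall x y, e x y = ((x \in A) && (y \in B)) || ((x \in B) && (y \in A))}].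

Definition complete_bipartite_components (T : finType) (e : rel T) :=
  forall C, C \in components e -> exists A B, complete_bipartite e C A B.

Lemma complete_bipartite_sym (T : finType) (e : rel T) (C A B : {set T}) :
  complete_bipartite e C A B -> complete_bipartite e C B A.
Proof.
case=> AB_C disjAB e_C; split; rewrite 1?setUC 1?disjoint_sym //.
by move=> x y xC yC; rewrite e_C // orbC.
Qed.

Lemma card_complete_bipartite (T : finType) (e : rel T) (C A B : {set T}) :
  complete_bipartite e C A B -> #|C| = #|A| + #|B|.
Proof. by case=> <- + _; rewrite cardsU -setI_eq0 => /eqP ->; rewrite cards0 subn0. Qed.

Lemma balanced_complete_bipartiteP (T : finType) (e : rel T) (C : {set T}) :
  balanced_complete_bipartite e C <->
  exists A B, complete_bipartite e C A B /\ `|#|A| - #|B| |%N <= 1.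
Proof.
split=> [[A [B [AB_C disjAB e_C bal]]] | [A [B [[AB_C disjAB e_C] bal]]]].
  by exists A, B; split; [split | lia].
by exists A, B; split => //; lia.
Qed.

Section Components.
Variables (T : finType) (e : rel T).
Hypothesis e_sym : symmetric e.

Lemma mem_component x : x \in component e x.
Proof. by rewrite inE connect0. Qed.

Lemma component_closed x y z : y \in component e x -> e y z -> z \in component e x.
Proof. by rewrite !inE => cxy eyz; apply: connect_trans cxy (connect1 eyz). Qed.

Lemma component_isolated x : (forall z, ~~ e x z) -> component e x = [set x].
Proof.
move=> isolated; apply/setP => y; rewrite !inE; apply/idP/eqP => [|->]; last exact: connect0.
case/connectP=> -[_ -> // | z p] /= /andP [exz _].
by move: (isolated z); rewrite exz.
Qed.

Lemma component_eq x y : y \in component e x -> component e y = component e x.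
Proof.
rewrite inE => cxy; apply/setP => z; rewrite !inE; apply/idP/idP; first exact: connect_trans.
by apply: connect_trans; rewrite (sym_connect_sym e_sym).
Qed.

Lemma components_trivIset : trivIset (components e).
Proof.
apply/trivIsetP => _ _ /imsetP [x _ ->] /imsetP [y _ ->]; apply: contraR.
rewrite -setI_eq0 => /set0Pn [z /setIP [cxz cyz]].
by rewrite -(component_eq cxz) (component_eq cyz).
Qed.

Lemma sum_components (F : T -> nat) :
  \sum_x F x = \sum_(C in components e) \sum_(x in C) F x.
Proof.
rewrite -(big_trivIset _ components_trivIset); apply: eq_bigl => y; apply/esym/bigcupP.
by exists (component e y); [exact: imset_f | exact: mem_component].
Qed.

End Components.

Section TwinNeighbours.
Variables (T : finType) (e : rel T).
Hypotheses (e_sym : symmetric e) (e_irr : irreflexive e) (twins : twin_neighbours e).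

(* Around an edge xv, the neighbourhoods of v and of x are the two sides. *)
Lemma twins_complete_bipartite : complete_bipartite_components e.
Proof.
move=> _ /imsetP [x _ ->].
have [/existsP [v exv] | no_nbr] := boolP [exists v, e x v]; last first.
  exists [set x], set0; rewrite component_isolated => [|z]; last first.
    by apply: contra no_nbr => exz; apply/existsP; exists z.
  split; [exact: setU0 | by rewrite -setI_eq0 setI0 |].
  by move=> a b /set1P -> /set1P ->; rewrite e_irr !inE andbF.
have evx : e v x by rewrite e_sym.
have nbrA y : e v y -> e y =1 e x := fun evy => twins evy evx.
have nbrB y : e x y -> e y =1 e v := fun exy => twins exy exv.
set A := [set y | e v y]; set B := [set y | e x y].
have disjAB : [disjoint A & B].
  rewrite -setI_eq0; apply/eqP/setP => y; rewrite !inE; apply/negbTE/negP => /andP [evy exy].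
  by have := nbrA y evy y; rewrite e_irr exy.
have closedAB : closed e (A :|: B).
  have step a b : e a b -> a \in A :|: B -> b \in A :|: B.
    by move=> eab; rewrite !inE => /orP [/nbrA | /nbrB] <-; rewrite eab ?orbT.
  by move=> a b eab; apply/idP/idP; apply: step; rewrite // e_sym.
have AB_C : A :|: B = component e x.
  apply/setP => y; rewrite !inE; apply/orP/idP => [[evy | exy] | cxy].
  - exact: connect_trans (connect1 exv) (connect1 evy).
  - exact: connect1.
  by apply/orP; have := closed_connect closedAB cxy; rewrite !inE evx => <-.
exists A, B; split=> // a b; rewrite -AB_C !inE => /orP [eva | exa] _.
  have nxa : ~~ e x a by have := nbrA a eva a; rewrite e_irr => <-.
  by rewrite eva (negbTE nxa) orbF nbrA.
have nva : ~~ e v a by have := nbrB a exa a; rewrite e_irr => <-.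
by rewrite exa (negbTE nva) nbrB.
Qed.

End TwinNeighbours.

Section BipartiteComponent.
Variables (T : finType) (e : rel T) (C : {set T}).
Hypotheses (e_sym : symmetric e) (C_comp : C \in components e).

Lemma nbrs_complete_bipartite A B y :
  complete_bipartite e C A B -> y \in A -> [set z | e y z] = B.
Proof.
case=> AB_C disjAB e_C yA; have yC : y \in C by rewrite -AB_C inE yA.
have yNB : y \notin B by rewrite (disjointFr disjAB yA).
apply/setP => z; rewrite inE; have [zC | zNC] := boolP (z \in C).
  by rewrite e_C // yA (negbTE yNB) orbF.
have zNB : z \notin B by apply: contra zNC; rewrite -AB_C inE orbC => ->.
rewrite (negbTE zNB); apply/negbTE; apply: contra zNC => eyz.
by case/imsetP: C_comp yC => x _ -> yCx; apply: component_closed yCx eyz.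
Qed.

Lemma sq_nbrs_complete_bipartite A B y : complete_bipartite e C A B -> y \in A ->
  [set z | sq_graph e y z] = if B == set0 then set0 else A :\ y.
Proof.
move=> bipAB yA; have nbrs_y := nbrs_complete_bipartite bipAB yA.
have nbrs_B w : w \in B -> [set z | e w z] = A.
  exact: nbrs_complete_bipartite (complete_bipartite_sym bipAB).
apply/setP => z; rewrite inE /sq_graph.
have [B0 | /set0Pn [w0 w0B]] := eqVneq B set0.
  rewrite inE; apply/negbTE; rewrite negb_and negb_exists; apply/orP; right.
  by apply/forallP => w; apply/negP => /andP [eyw _]; move/setP/(_ w): nbrs_y; rewrite B0 !inE eyw.
rewrite !inE eq_sym; congr (_ && _); apply/existsP/idP => [[w /andP [eyw ezw]] | zA].
  have wB : w \in B by rewrite -nbrs_y inE.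
  by rewrite -(nbrs_B w wB) inE e_sym.
exists w0; apply/andP; split; first by move: w0B; rewrite -nbrs_y inE.
by move: zA; rewrite -(nbrs_B w0 w0B) inE e_sym.
Qed.

Lemma complete_bipartite_set0 A : complete_bipartite e C A set0 -> #|A| = 1.
Proof.
move=> bipA0; have [AC _ _] := bipA0; rewrite setU0 in AC.
case/imsetP: C_comp => x _ Cx; have xA : x \in A by rewrite AC Cx mem_component.
have /setP nbrs_x := nbrs_complete_bipartite bipA0 xA.
by rewrite AC Cx component_isolated ?cards1 // => z; have := nbrs_x z; rewrite !inE => ->.
Qed.

Lemma sum_deg_complete_bipartite A B : complete_bipartite e C A B ->
  \sum_(y in C) (deg (sq_graph e) y).+1 = \sum_(y in C) deg e y + `|#|A| - #|B| |%N ^ 2.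
Proof.
move=> bipAB; have bipBA := complete_bipartite_sym bipAB; have [AB_C disjAB _] := bipAB.
have sum_deg_side X Y : complete_bipartite e C X Y -> \sum_(y in X) deg e y = #|X| * #|Y|.
  move=> bipXY; rewrite -sum_nat_const; apply: eq_bigr => y yX.
  by rewrite /deg (nbrs_complete_bipartite bipXY yX).
have sum_sq_deg_side X Y : complete_bipartite e C X Y ->
    \sum_(y in X) (deg (sq_graph e) y).+1 = #|X| * (if Y == set0 then 1 else #|X|).
  move=> bipXY; rewrite -sum_nat_const; apply: eq_bigr => y yX.
  rewrite /deg (sq_nbrs_complete_bipartite bipXY yX).
  by case: (Y == set0); rewrite ?cards0 // (cardsD1 y X) yX.
have sum_C F : \sum_(y in C) F y = \sum_(y in A) F y + \sum_(y in B) F y.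
  by rewrite -bigU //; apply: eq_bigl => y; rewrite -AB_C !inE.
rewrite !sum_C (sum_deg_side _ _ bipAB) (sum_deg_side _ _ bipBA).
rewrite (sum_sq_deg_side _ _ bipAB) (sum_sq_deg_side _ _ bipBA).
have [B0 | B_nonempty] := eqVneq B set0.
  by move: bipAB; rewrite B0 cards0 => /complete_bipartite_set0 ->.
have [A0 | A_nonempty] := eqVneq A set0.
  by move: bipBA; rewrite A0 cards0 => /complete_bipartite_set0 ->.
have := B_nonempty; have := A_nonempty; rewrite -!card_gt0; nia.
Qed.

End BipartiteComponent.

Lemma odd_distn (a b : nat) : odd `|a - b|%N = odd (a + b).
Proof.
wlog le_ab : a b / a <= b.
  by move=> wlog_ab; case: (leqP a b) => [|/ltnW] /wlog_ab; rewrite // distnC addnC.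
by rewrite distnEr // oddB // oddD addbC.
Qed.

Lemma odd_leq_sqrn d : odd d <= d ^ 2.
Proof. by case: d => [|d]; rewrite // (leq_trans (leq_b1 _)) // expn_gt0. Qed.

Lemma sqrn_leq1 d : d <= 1 -> d ^ 2 = odd d.
Proof. by case: d => [|[|]]. Qed.

(* The contribution of C to #arcs(G^(2)) + n - #arcs(G); the subtraction does not
   truncate on complete bipartite components (sum_deg_complete_bipartite). *)
Definition sq_excess (T : finType) (e : rel T) (C : {set T}) :=
  \sum_(y in C) (deg (sq_graph e) y).+1 - \sum_(y in C) deg e y.

Section Excess.
Variables (T : finType) (e : rel T).
Hypothesis e_sym : symmetric e.

Lemma sq_excess_complete_bipartite C A B : C \in components e ->
  complete_bipartite e C A B -> sq_excess e C = `|#|A| - #|B| |%N ^ 2.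
Proof.
by move=> C_comp bipAB; rewrite /sq_excess (sum_deg_complete_bipartite e_sym C_comp bipAB) addKn.
Qed.

Lemma card_sq_arcs_excess :
  complete_bipartite_components e ->
  #|arcs (sq_graph e)| + #|T| = #|arcs e| + \sum_(C in components e) sq_excess e C.
Proof.
move=> bip_all; rewrite -!sum_deg -sum1_card -big_split /= !(sum_components e_sym).
rewrite -big_split /=; apply: eq_bigr => C C_comp; have [A [B bipAB]] := bip_all C C_comp.
rewrite (sq_excess_complete_bipartite C_comp bipAB).
rewrite -(sum_deg_complete_bipartite e_sym C_comp bipAB).
by apply: eq_bigr => x _; rewrite addn1.
Qed.

Lemma odd_card_le_sq_excess C A B : C \in components e ->
  complete_bipartite e C A B -> odd #|C| <= sq_excess e C.
Proof.
move=> C_comp bipAB; rewrite (sq_excess_complete_bipartite C_comp bipAB).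
by rewrite (card_complete_bipartite bipAB) -odd_distn odd_leq_sqrn.
Qed.

Lemma sq_excess_balanced C : C \in components e ->
  balanced_complete_bipartite e C -> sq_excess e C = odd #|C|.
Proof.
move=> C_comp /balanced_complete_bipartiteP [A [B [bipAB bal]]].
rewrite (sq_excess_complete_bipartite C_comp bipAB) (card_complete_bipartite bipAB).
by rewrite -odd_distn sqrn_leq1.
Qed.

Lemma sq_excess_leq1_balanced C A B : C \in components e ->
  complete_bipartite e C A B -> sq_excess e C <= 1 -> balanced_complete_bipartite e C.
Proof.
move=> C_comp bipAB; rewrite (sq_excess_complete_bipartite C_comp bipAB) => le1.
by apply/balanced_complete_bipartiteP; exists A, B; split => //; nia.
Qed.

Lemma card_odd_components :
  #|[set C in components e | odd #|C|]| = \sum_(C in components e) odd #|C|.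
Proof.
rewrite -sum1_card big_mkcond [RHS]big_mkcond /=; apply: eq_bigr => C _.
by rewrite inE; case: (C \in _); case: odd.
Qed.

Lemma odd_card_components : odd #|T| = odd (\sum_(C in components e) odd #|C|).
Proof.
rewrite -sum1_card (sum_components e_sym) !(big_morph odd oddD erefl).
by apply: eq_bigr => C _; rewrite oddb sum1_card.
Qed.

Lemma sum_sq_excess_odd_iff :
  complete_bipartite_components e ->
  \sum_(C in components e) sq_excess e C = odd #|T| <->
  (forall C, C \in components e -> balanced_complete_bipartite e C) /\
  #|[set C in components e | odd #|C|]| <= 1.
Proof.
move=> bip_all; rewrite card_odd_components; split=> [sum_odd | [balanced odd_le1]].
  have sum_le1 : \sum_(C in components e) sq_excess e C <= 1 by rewrite sum_odd leq_b1.
  split=> [C C_comp | ].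
    have [A [B bipAB]] := bip_all C C_comp; apply: (sq_excess_leq1_balanced C_comp bipAB).
    by apply: leq_trans sum_le1; rewrite (bigD1 C C_comp) leq_addr.
  apply: leq_trans sum_le1; apply: leq_sum => C C_comp.
  by have [A [B bipAB]] := bip_all C C_comp; apply: odd_card_le_sq_excess bipAB.
rewrite (eq_bigr _ (fun C C_comp => sq_excess_balanced C_comp (balanced C C_comp))).
by rewrite odd_card_components; move: odd_le1; case: (\sum_(C in _) _) => [|[|]].
Qed.

End Excess.

Theorem mainTheorem14 (T : finType) (e : rel T) :
  simple_graph e ->
  #|edges e| <= #|edges (sq_graph e)| + #|T|./2 /\
  (#|edges e| = #|edges (sq_graph e)| + #|T|./2 <->
     (forall C, C \in components e -> balanced_complete_bipartite e C) /\
     #|[set C in components e | odd #|C|]| <= 1).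
Proof.
move=> [e_sym e_irr].
have arcs_e := handshake (conj e_sym e_irr).
have arcs_sq := handshake (sq_graph_simple e_sym).
have arcs_le := card_arcs_le e_sym e_irr.
have n_split := odd_double_half #|T|.
split; first by lia.
split=> [eq_edges | extremal].
  have bip_all : complete_bipartite_components e.
    by apply: (twins_complete_bipartite e_sym e_irr); apply: card_arcs_tight => //; lia.
  apply/(sum_sq_excess_odd_iff e_sym bip_all).
  by have := card_sq_arcs_excess e_sym bip_all; lia.
have bip_all : complete_bipartite_components e.
  by move=> C /extremal.1 /balanced_complete_bipartiteP [A [B [bipAB _]]]; exists A, B.
have := card_sq_arcs_excess e_sym bip_all.
by move/(sum_sq_excess_odd_iff e_sym bip_all): extremal; lia.
Qed.
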